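(* Let $G$ be a graph with demand functions $f$ and $g$ and fractional list-assignment $L$ such that for each $v\in V(G)$, $g(v) \leq f(v)\mu(L(v))$. If for each $S\subseteq V(G)$ with $\mu(\bigcap_{v\in S}L(v)) > 0$ the graph $G[S]$ has an $f$-coloring (with respect to $f$ restricted to $S$), then $G$ has a fractional $(g, L)$-coloring.
   Context: A demand function for a graph $G$ is a function $f: V(G)\to [0,1]\cap\mathbb{Q}$. A fractional coloring of $G$ is a function $\phi$ assigning to each $v\in V(G)$ a measurable subset $\phi(v)\subseteq[0,1]$ such that $\phi(u)\cap\phi(v)=\varnothing$ for every edge $uv$; an $f$-coloring is a fractional coloring with $\mu(\phi(v))\geq f(v)$ for all $v$, $\mu$ being Lebesgue measure. A fractional list-assignment is a function $L$ assigning to each vertex a measurable subset $L(v)\subseteq[0,1]$. A fractional $(g,L)$-coloring is a $g$-coloring $\phi$ with $\phi(v)\subseteq L(v)$ for all $v$. *)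

From mathcomp Require Import all_boot all_order all_algebra.
From mathcomp Require Import all_classical all_reals all_analysis.
Set Implicit Arguments. Unset Strict Implicit. Unset Printing Implicit Defensive.
Import Order.TTheory GRing.Theory Num.Theory.
Local Open Scope classical_set_scope.
Local Open Scope ring_scope.

(* The carrier R equipped with the Lebesgue (completed) sigma-algebra. *)
Definition lebR (R : realType) :=
  caratheodory_type (R:=R)
    (T:=lebesgue_stieltjes_measure_ocitv_type__canonical__measurable_structure_SemiRingOfSets R)
    (wlength idfun)^*%mu.

Definition lmeasurable (R : realType) (A : set R) : Prop :=
  measurable (A : set (lebR R)).
Definition mu (R : realType) (A : set R) : \bar R :=
  @completed_lebesgue_measure R (A : set (lebR R)).

Definition simple_graph (T : finType) (e : rel T) : Prop :=
  symmetric e /\ irreflexive e.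

Definition demand (T : finType) (f : T -> rat) : Prop :=
  forall v, 0 <= f v <= 1.

Definition frac_list_assignment (R : realType) (T : finType) (L : T -> set R) : Prop :=
  forall v, lmeasurable (L v) /\ L v `<=` `[0, 1].

(* phi is a fractional coloring of the induced subgraph G[S]
   (phi is only relevant on the vertices of S). *)
Definition frac_coloring_on (R : realType) (T : finType) (e : rel T) (S : {set T})
    (phi : T -> set R) : Prop :=
  (forall v, v \in S -> lmeasurable (phi v) /\ phi v `<=` `[0, 1]) /\
  (forall u v, u \in S -> v \in S -> e u v -> phi u `&` phi v = set0).

Definition f_coloring_on (R : realType) (T : finType) (e : rel T) (S : {set T})
    (f : T -> rat) (phi : T -> set R) : Prop :=
  frac_coloring_on e S phi /\
  (forall v, v \in S -> ((ratr (f v) : R)%:E <= mu (phi v))%E).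

Definition gL_coloring (R : realType) (T : finType) (e : rel T)
    (g : T -> rat) (L : T -> set R) (phi : T -> set R) : Prop :=
  f_coloring_on e [set: T] g phi /\ (forall v, phi v `<=` L v).

Definition unit01 (R : realType) : set R := `[0, 1].

(* Cut [0, 1] into the Venn regions A_S of the lists: the points lying in L v
   exactly for v in S.  A region of positive measure lies in the intersection of
   the L v, v in S, so G[S] has an f-coloring; recording which vertices receive
   each colour point turns it into a probability distribution w_S on the stable
   sets I of G[S] in which every v in S has mass at least f(v).  Lebesgue measure
   has no atoms, so A_S splits into disjoint pieces B_{S,I} of measure
   w_S(I) mu(A_S).  Giving v every piece B_{S,I} with v in S and v in I is a
   proper colouring (the pieces are disjoint and I is stable) inside L v, of
   measure at least the sum over S containing v of f(v) mu(A_S), which is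
   f(v) mu(L v) >= g(v). *)

From mathcomp Require Import all_boot all_order all_algebra.
From mathcomp Require Import all_classical all_reals all_analysis.
From mathcomp Require Import lra.
Set Implicit Arguments. Unset Strict Implicit. Unset Printing Implicit Defensive.
Import Order.TTheory GRing.Theory Num.Theory numFieldNormedType.Exports.
Local Open Scope classical_set_scope.
Local Open Scope ring_scope.

Lemma trivIset_refine (X I J : Type) (A : I -> set X) (B : I -> J -> set X) :
  trivIset setT A -> (forall i, trivIset setT (B i)) -> (forall i j, B i j `<=` A i) ->
  trivIset setT (fun p : I * J => B p.1 p.2).
Proof.
move=> tA tB BA [i j] [i' j'] _ _ [x [Bx Bx']].
have eii' : i = i' by apply: tA => //; exists x; split; [exact: BA Bx | exact: BA Bx'].
by subst i'; congr pair; apply: (tB i) => //; exists x.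
Qed.

Section finite_additivity.
Context d (X : ringOfSetsType d) (R : realFieldType) (m : {content set X -> \bar R}).

Lemma measure_bigcup_finType (I : finType) (P : pred I) (F : I -> set X) :
  (forall i, P i -> measurable (F i)) -> trivIset [set i | P i] F ->
  m (\bigcup_(i in [set i | P i]) F i) = (\sum_(i | P i) m (F i))%E.
Proof.
move=> mF tF; rewrite measure_fin_bigcup //; last exact: finite_finset.
by rewrite (bigfs _ _ (P := P)) ?index_enum_uniq // => i; rewrite mem_index_enum.
Qed.

End finite_additivity.

Section venn_regions.
Context d (X : algebraOfSetsType d) (I : finType) (U : set X) (A : I -> set X).

Definition members (x : X) : {set I} := [set i | `[< A i x >]].

Definition venn (P : {set I}) : set X := U `&` [set x | members x = P].

Lemma membersP x i : reflect (A i x) (i \in members x).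
Proof. by rewrite inE; apply: asboolP. Qed.

Lemma venn_subU (P : {set I}) : venn P `<=` U.
Proof. by move=> x []. Qed.

Lemma venn_sub (P : {set I}) i : i \in P -> venn P `<=` A i.
Proof. by move=> iP x [_ /= xP]; apply/membersP; rewrite xP. Qed.

Lemma trivIset_venn : trivIset setT venn.
Proof. by move=> P Q _ _ [x [[_ <-] [_ <-]]]. Qed.

Lemma measurable_venn (P : {set I}) :
  measurable U -> (forall i, measurable (A i)) -> measurable (venn P).
Proof.
move=> mU mA; apply: measurableI => //.
have -> : [set x | members x = P] =
    \bigcap_(i in setT) (if i \in P then A i else ~` A i).
  apply/seteqP; split => x /=.
  - by move=> <- i _; case: membersP.
  - move=> xP; apply/setP => i; have := xP i Logic.I.
    by case: membersP; case: (i \in P).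
apply: fin_bigcap_measurable; first exact: finite_finset.
by move=> i _; case: (i \in P) => //; apply: measurableC.
Qed.

Lemma setI_members (Q : pred {set I}) :
  U `&` [set x | Q (members x)] = \bigcup_(P in [set P | Q P]) venn P.
Proof.
apply/seteqP; split => [x [Ux Qx]|x [P /= QP [Ux xP]]].
- by exists (members x).
- by split; rewrite //= xP.
Qed.

Lemma measure_setI_members (R : realFieldType) (m : {content set X -> \bar R})
    (Q : pred {set I}) :
  measurable U -> (forall i, measurable (A i)) ->
  m (U `&` [set x | Q (members x)]) = (\sum_(P | Q P) m (venn P))%E.
Proof.
move=> mU mA; rewrite setI_members measure_bigcup_finType //.
- by move=> P _; apply: measurable_venn.
- by move=> P P' _ _; apply: trivIset_venn.
Qed.

Lemma measure_venn_sum (R : realFieldType) (m : {content set X -> \bar R}) :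
  measurable U -> (forall i, measurable (A i)) -> m U = (\sum_P m (venn P))%E.
Proof.
move=> mU mA; rewrite -(measure_setI_members m predT mU mA); congr (m _).
by apply/seteqP; split => [x Ux|x []].
Qed.

Lemma measure_venn_mem (R : realFieldType) (m : {content set X -> \bar R}) i :
  measurable U -> (forall i, measurable (A i)) -> A i `<=` U ->
  m (A i) = (\sum_(P : {set I} | i \in P) m (venn P))%E.
Proof.
move=> mU mA AU.
rewrite -(measure_setI_members m (fun P : {set I} => i \in P) mU mA); congr (m _).
apply/seteqP; split => [x Ax|x [_ /membersP //]].
by split; [exact: AU | exact/membersP].
Qed.

End venn_regions.

Lemma lipschitz1_continuous (R : realType) (F : R -> R) :
  (forall s t, `|F t - F s| <= `|t - s|) -> continuous F.
Proof.
move=> F1 x; apply/cvgrPdist_le => eps eps0.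
exists eps; first exact: eps0.
by move=> y; rewrite /ball_ /= => xy; rewrite (le_trans (F1 y x)) // ltW.
Qed.

Section lebesgue_facts.
Variable R : realType.
Implicit Types (A B : set R) (a b : R).

Lemma mu_le A B : A `<=` B -> (mu A <= mu B)%E.
Proof. by move=> AB; rewrite /mu; apply: le_outer_measure. Qed.

Lemma lmeasurable_itv (i : interval R) : lmeasurable [set` i].
Proof.
have mi : measurable ([set` i] : set (measurableTypeR R)) by exact: measurable_itv.
exact: sub_caratheodory.
Qed.

Lemma mu_itv (i : interval R) : mu [set` i] = lebesgue_measure [set` i].
Proof. by []. Qed.

Lemma mu_oc a b : a <= b -> mu `]a, b] = (b - a)%:E.
Proof.
move=> ab; rewrite mu_itv lebesgue_measure_itv /= lte_fin.
by case: ltgtP ab => // ->; rewrite subrr.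
Qed.

Lemma mu_fin_num_bounded A a b : A `<=` `[a, b] -> mu A \is a fin_num.
Proof.
move=> Aab; rewrite ge0_fin_numE ?measure_ge0 //.
apply: le_lt_trans (mu_le Aab) _; rewrite mu_itv lebesgue_measure_itv.
by case: ifP => _; rewrite ?ltry.
Qed.

End lebesgue_facts.

Section lebesgue_nonatomic.
Variables (R : realType) (A : set R) (a b : R).
Hypotheses (mA : lmeasurable A) (Aab : A `<=` `[a, b]).

Let G t := A `&` `]-oo, t].
Let F t := fine (mu (G t)).

Let FE t : (F t)%:E = mu (G t).
Proof. by rewrite fineK // (@mu_fin_num_bounded _ _ a b) // => x [/Aab]. Qed.

Let F_increment s t : s <= t -> 0 <= F t - F s <= t - s.
Proof.
move=> st.
have mD : lmeasurable (A `&` `]s, t]) by apply: measurableI => //; apply: lmeasurable_itv.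
have mGs : lmeasurable (G s) by apply: measurableI => //; apply: lmeasurable_itv.
have GtE : G t = G s `|` (A `&` `]s, t]).
  apply/seteqP; split => x /=; rewrite !in_itv /=.
  - by move=> [Ax xt]; case: (leP x s) => xs; [left | right].
  - by case=> [[Ax xs]|[Ax /andP[_ xt]]]; split => //; apply: le_trans st.
have GsD : G s `&` (A `&` `]s, t]) = set0.
  apply/seteqP; split => // x /=; rewrite !in_itv /= => -[[_ xs] [_ /andP[sx _]]].
  by move: (lt_le_trans sx xs); rewrite ltxx.
have muGt : (F t)%:E = ((F s)%:E + mu (A `&` `]s, t]))%E.
  by rewrite !FE GtE /mu measureU.
have finD : mu (A `&` `]s, t]) \is a fin_num.
  by apply: (@mu_fin_num_bounded _ _ a b) => x [/Aab].
have -> : F t - F s = fine (mu (A `&` `]s, t])).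
  by apply: EFin_inj; rewrite EFinB muGt addeAC subee // add0e fineK.
apply/andP; split; first by rewrite fine_ge0 // measure_ge0.
by rewrite -lee_fin fineK // -mu_oc //; apply: mu_le => x [].
Qed.

Let F_continuous : continuous F.
Proof.
apply: lipschitz1_continuous => s t.
wlog st : s t / s <= t.
  move=> W; case: (leP s t) => [|/ltW] st; first exact: W.
  by rewrite distrC [`|t - s|]distrC; apply: W.
have /andP[h1 h2] := F_increment st.
by rewrite (ger0_norm h1) ger0_norm // subr_ge0.
Qed.

Lemma exists_subset_measure (c : \bar R) : (0 <= c <= mu A)%E ->
  exists B, [/\ B `<=` A, lmeasurable B & mu B = c].
Proof.
move=> /andP[c0 cA].
(* [t0] lies below [A] and is at most [b], the right end of the IVT interval. *)
pose t0 := Num.min (a - 1) b.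
have Ft0 : F t0 = 0.
  rewrite /F /G; suff -> : A `&` `]-oo, t0] = set0 by rewrite /mu measure0.
  apply/seteqP; split => // x [/Aab]; rewrite /= !in_itv /= => /andP[ax _].
  by rewrite /t0 le_min => /andP[]; lra.
have Fb : (F b)%:E = mu A.
  rewrite FE /G; congr mu; apply/seteqP; split => [x []//|x Ax]; split => //.
  by have := Aab Ax; rewrite /= !in_itv /= => /andP[].
have cfin : c \is a fin_num.
  by rewrite ge0_fin_numE // (le_lt_trans cA) // ltey_eq (@mu_fin_num_bounded _ _ a b).
have [t _ Ft] : exists2 t, t \in `[t0, b] & F t = fine c.
  apply: IVT; first by rewrite ge_min lexx orbT.
    exact: continuous_subspaceT.
  rewrite Ft0 ge_min le_max fine_ge0 //=.
  by apply/orP; right; rewrite -lee_fin Fb fineK.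
exists (G t); split; first by move=> x [].
- by apply: measurableI => //; apply: lmeasurable_itv.
- by rewrite -FE Ft fineK.
Qed.

End lebesgue_nonatomic.

Lemma exists_disjoint_subsets_measure (R : realType) (I : eqType) (s : seq I)
    (A : set R) (a b : R) (c : I -> \bar R) :
  lmeasurable A -> A `<=` `[a, b] -> (forall i, 0 <= c i)%E ->
  (\sum_(i <- s) c i <= mu A)%E ->
  exists B : I -> set R, [/\ forall i, B i `<=` A, forall i, lmeasurable (B i),
    forall i, i \in s -> mu (B i) = c i & trivIset setT B].
Proof.
elim: s A => [|i0 s IH] A mA Aab c0 sA.
  exists (fun=> set0); split.
  - by move=> i; apply: sub0set.
  - by move=> i; apply: measurable0.
  - by [].
  - by move=> i j _ _ [x []].
rewrite big_cons in sA.
have [B0 [B0A mB0 muB0]] : exists B0, [/\ B0 `<=` A, lmeasurable B0 & mu B0 = c i0].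
  apply: (exists_subset_measure mA Aab); rewrite c0 /=.
  by apply: le_trans sA; rewrite leeDl // sume_ge0.
have mAB0 : lmeasurable (A `\` B0) by apply: measurableD.
have [|B [BA mB muB tB]] := IH (A `\` B0) mAB0 (fun x Ax => Aab x Ax.1) c0.
  have muA : mu A = (mu B0 + mu (A `\` B0))%E.
    by rewrite /mu -[in LHS](setDUK B0A) measureU // setDIK.
  have finB0 : mu B0 \is a fin_num.
    by apply: (@mu_fin_num_bounded _ _ a b) => x /B0A /Aab.
  by rewrite -(leeD2lE _ _ finB0) -muA muB0.
exists (fun i => if i == i0 then B0 else B i); split.
- by move=> i; case: eqP => // _ x /BA [].
- by move=> i; case: eqP.
- by move=> i; rewrite inE; case: eqP => [-> //|_ /= /muB].
- move=> i j _ _; case: eqP => [->|ni]; case: eqP => [->|nj] //.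
  + by move=> [x [B0x /BA[]]].
  + by move=> [x [/BA[] _]].
  + by move/tB; apply.
Qed.

Section fractional_colorings.
Variables (R : realType) (T : finType) (e : rel T).

Definition stable (I : {set T}) : bool := [forall u in I, forall v in I, ~~ e u v].

Lemma stableP (I : {set T}) :
  reflect (forall u v, u \in I -> v \in I -> ~~ e u v) (stable I).
Proof.
apply: (iffP forall_inP) => [st u v uI vI|st u uI].
- by have /forall_inP := st u uI; apply.
- by apply/forall_inP => v; apply: st.
Qed.

Lemma f_coloring_stable_weights (S : {set T}) (f : T -> rat) (phi : T -> set R) :
  f_coloring_on e S f phi ->
  exists w : {set T} -> \bar R, [/\ forall I, (0 <= w I)%E, (\sum_I w I = 1)%E &
    forall v, v \in S ->
      ((ratr (f v))%:E <= \sum_(I : {set T} | (v \in I) && stable I) w I)%E].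
Proof.
move=> [[phiS ephi] fphi].
pose U : set (lebR R) := (`[0, 1]%classic : set R).
(* An f-coloring of G[S] says nothing about [phi] outside [S]. *)
pose phiS' v : set (lebR R) := if v \in S then phi v else set0.
have mU : measurable U by apply: lmeasurable_itv.
have mphiS' v : measurable (phiS' v).
  by rewrite /phiS'; case: ifPn => [/phiS[]|_]; [|apply: measurable0].
have phiS'_S u x : phiS' u x -> u \in S /\ phi u x.
  by rewrite /phiS'; case: ifP.
have stable_venn I x : venn U phiS' I x -> stable I.
  move=> Vx; apply/stableP => u u' uI u'I.
  have [uS phiu] := phiS'_S u x (venn_sub uI Vx).
  have [u'S phiu'] := phiS'_S u' x (venn_sub u'I Vx).
  apply/negP => /(ephi u u' uS u'S) phi0.
  by have : (phi u `&` phi u') x by []; rewrite phi0.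
exists (fun I => mu (venn U phiS' I)); split.
- by move=> I; apply: measure_ge0.
- rewrite /mu -(measure_venn_sum _ mU mphiS').
  by change (lebesgue_measure U = 1%E); rewrite lebesgue_measure_itv /= lte_fin ltr01 sube0.
- move=> v vS; apply: le_trans (fphi v vS) _.
  have phiU : phiS' v `<=` U by rewrite /phiS' vS; apply: (phiS v vS).2.
  have -> : phi v = phiS' v by rewrite /phiS' vS.
  rewrite /mu (measure_venn_mem _ mU mphiS' phiU) [leRHS]big_mkcondr /=.
  apply: lee_sum => I _; case: ifPn => // nI.
  rewrite (_ : venn _ _ _ = set0) ?measure0 //.
  by apply/seteqP; split => // x /stable_venn; rewrite (negbTE nI).
Qed.

Lemma stable_pieces_of_region (S : {set T}) (f : T -> rat) (A : set R) (a b : R) :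
  lmeasurable A -> A `<=` `[a, b] ->
  ((0 < mu A)%E -> exists phi : T -> set R, f_coloring_on e S f phi) ->
  exists B : {set T} -> set R,
    [/\ forall I, B I `<=` A, forall I, lmeasurable (B I), trivIset setT B &
      forall v, v \in S ->
        ((ratr (f v))%:E * mu A <= \sum_(I : {set T} | (v \in I) && stable I) mu (B I))%E].
Proof.
move=> mA Aab colS; have [A0|/colS[phi /f_coloring_stable_weights[w [w0 w1 fw]]]] :=
  leP (mu A) 0%E.
  exists (fun=> set0); split.
  - by move=> I; apply: sub0set.
  - by move=> I; exact: measurable0.
  - by move=> I J _ _ [x []].
  - move=> v _; rewrite (_ : mu A = 0%E) ?mule0 ?sume_ge0 //.
    by apply/eqP; rewrite eq_le A0 measure_ge0.
have c0 I : (0 <= w I * mu A)%E by rewrite mule_ge0 // measure_ge0.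
have [|B [BA mB muB tB]] :=
  exists_disjoint_subsets_measure (s := index_enum {set T}) mA Aab c0.
  by rewrite -ge0_sume_distrl // w1 mul1e.
exists B; split => // v vS.
under eq_bigr => I _ do rewrite muB ?mem_index_enum //.
by rewrite -ge0_sume_distrl // lee_wpmul2r ?measure_ge0 ?fw.
Qed.

Section gluing.
Variables (A : {set T} -> set R) (B : {set T} -> {set T} -> set R).
Hypotheses (tA : trivIset setT A) (BA : forall S I, B S I `<=` A S).
Hypotheses (tB : forall S, trivIset setT (B S)) (mB : forall S I, lmeasurable (B S I)).

Definition glue v : set R := \bigcup_(p in [set p : {set T} * {set T} |
  [&& v \in p.1, v \in p.2 & stable p.2]]) B p.1 p.2.

Let tBpair := trivIset_refine tA tB BA.

Lemma lmeasurable_glue v : lmeasurable (glue v).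
Proof. by apply: fin_bigcup_measurable => [|p _]; [exact: finite_finset | apply: mB]. Qed.

Lemma glue_sub v : glue v `<=` \bigcup_(S in [set S : {set T} | v \in S]) A S.
Proof. by move=> x [[S I] /and3P[vS _ _] /BA]; exists S. Qed.

Lemma glue_disjoint u v : e u v -> glue u `&` glue v = set0.
Proof.
move=> euv; apply/seteqP; split => // x.
move=> [[p /and3P[_ up st] Bpx] [q /and3P[_ vq _] Bqx]].
have pq : p = q by apply: tBpair => //; exists x.
by subst q; move/stableP: st => /(_ u v up vq); rewrite euv.
Qed.

Lemma mu_glue v : mu (glue v) =
  (\sum_(S : {set T} | v \in S) \sum_(I : {set T} | (v \in I) && stable I) mu (B S I))%E.
Proof.
rewrite /glue /mu measure_bigcup_finType => [|p _|]; first last.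
- exact: sub_trivIset tBpair.
- exact: mB.
by rewrite -(pair_big_dep (fun S : {set T} => v \in S)
  (fun _ (I : {set T}) => (v \in I) && stable I) (fun S I => mu (B S I))).
Qed.

End gluing.

End fractional_colorings.

Theorem lemma2p7 (R : realType) (T : finType) (e : rel T)
    (f g : T -> rat) (L : T -> set R) :
  simple_graph e -> demand f -> demand g -> frac_list_assignment L ->
  (forall v, ((ratr (g v) : R)%:E <= (ratr (f v) : R)%:E * mu (L v))%E) ->
  (forall S : {set T},
      (0%E < mu (@unit01 R `&` \bigcap_(v in [set v | v \in S]) L v))%E ->
      exists phi : T -> set R, f_coloring_on e S f phi) ->
  exists phi : T -> set R, gL_coloring e g L phi.
Proof.
move=> _ _ _ listL gfL colS.
pose U : set (lebR R) := (`[0, 1]%classic : set R).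
have mU : measurable U by apply: lmeasurable_itv.
have mL v : lmeasurable (L v) := (listL v).1.
pose A := venn U L.
have AU S : A S `<=` `[0, 1] by apply: venn_subU.
have colA S : (0 < mu (A S))%E -> exists phi : T -> set R, f_coloring_on e S f phi.
  move=> /lt_le_trans-/(_ _ (mu_le _)) AS; apply: colS; apply: AS => x Ax.
  by split; [exact: AU Ax | move=> v vS; exact: venn_sub vS x Ax].
have [B HB] := choice (fun S =>
  stable_pieces_of_region (measurable_venn S mU mL) (AU S) (colA S)).
have BA S I : B S I `<=` A S by case: (HB S).
have mB S I : lmeasurable (B S I) by case: (HB S).
have tB S : trivIset setT (B S) by case: (HB S).
have tA := @trivIset_venn _ _ _ U L.
exists (glue e B); split; [split; [split|] |].
- move=> v _; split; first exact: (lmeasurable_glue e mB).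
  by move=> x /(glue_sub BA)[S _]; apply: AU.
- by move=> u v _ _; apply: glue_disjoint tA BA tB u v.
- move=> v _; rewrite (mu_glue _ tA BA tB mB); apply: le_trans (gfL v) _.
  rewrite /mu (measure_venn_mem _ mU mL (listL v).2) ge0_sume_distrr //.
  by apply: lee_sum => S vS; case: (HB S) => _ _ _; apply.
- by move=> v x /(glue_sub BA)[S vS]; apply: venn_sub.
Qed.
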